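(* Let $\mathcal P$ be a 2-reflex orthostack made of three bricks with canonical contact rectangles, whose signature is neither of the form $\sqcap_i\sqcap_4$ nor of the form $\sqcup_4\sqcup_i$ ($i\in\{1,2,3,4\}$). Then $\mathcal P$ is guarded by one closed face guard that is neither the topmost nor the bottommost horizontal face of $\mathcal P$.
   Context: A 2-reflex orthostack is an orthogonal polyhedron with no reflex edge parallel to the vertical ($z$) axis all of whose horizontal cross-sections are simply connected; it is a stack of bricks $B_t=R_t\times[z_{t-1},z_t]$, $t=1,\dots,k$ (bottom to top), $z_0<\dots<z_k$, each $R_t$ an axis-parallel rectangle, $R_t\ne R_{t+1}$. The contact rectangle between $B_t$ and $B_{t+1}$ is $(R_t\cap R_{t+1})\times\{z_t\}$; it is canonical if one of $R_t,R_{t+1}$ is strictly contained in the other and their set difference is connected. The type of a canonical contact rectangle is the number $i\in\{1,2,3,4\}$ of sides of the smaller rectangle not contained in the boundary of the larger one. The contact is denoted $\sqcup_i$ if $R_t\subsetneq R_{t+1}$ and $\sqcap_i$ if $R_{t+1}\subsetneq R_t$. The signature is the sequence of these symbols for $t=1,\dots,k-1$, read bottom to top. A point $x$ is visible to $y$ if segment $xy$ does not meet the exterior of the polyhedron; a closed face guard is a face including its boundary; it guards the polyhedron if every point is visible from some point of it. *)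

From Stdlib Require Import Reals.
Open Scope R_scope.

Definition open_in {T : Type} (d : T -> T -> R) (U : T -> Prop) : Prop :=
  forall x, U x -> exists e, 0 < e /\ forall y, d x y < e -> U y.

Definition connected {T : Type} (d : T -> T -> R) (S : T -> Prop) : Prop :=
  ~ (exists U V : T -> Prop,
        open_in d U /\ open_in d V /\
        (forall x, S x -> U x \/ V x) /\
        (forall x, S x -> U x -> V x -> False) /\
        (exists x, S x /\ U x) /\ (exists x, S x /\ V x)).

Definition closure {T : Type} (d : T -> T -> R) (S : T -> Prop) (y : T) : Prop :=
  forall e, 0 < e -> exists z, S z /\ d y z < e.

Definition boundary {T : Type} (d : T -> T -> R) (S : T -> Prop) (x : T) : Prop :=
  (forall e, 0 < e -> exists y, d x y < e /\ S y) /\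
  (forall e, 0 < e -> exists y, d x y < e /\ ~ S y).

Definition component {T : Type} (d : T -> T -> R) (S : T -> Prop) (x0 y : T) : Prop :=
  S x0 /\ exists D : T -> Prop,
    (forall z, D z -> S z) /\ D x0 /\ D y /\ connected d D.

Definition pt2 := (R * R)%type.
Definition dist2 (a b : pt2) : R :=
  sqrt ((fst a - fst b)^2 + (snd a - snd b)^2).

(* closed axis-parallel rectangle [x1,x2] x [y1,y2] *)
Record rect := Rect { rx1 : R; rx2 : R; ry1 : R; ry2 : R }.
Definition valid_rect (Q : rect) : Prop := rx1 Q < rx2 Q /\ ry1 Q < ry2 Q.

Definition in_rect (Q : rect) (p : pt2) : Prop :=
  rx1 Q <= fst p <= rx2 Q /\ ry1 Q <= snd p <= ry2 Q.

Definition subset2 (A B : pt2 -> Prop) : Prop := forall p, A p -> B p.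

Definition strict_sub (A B : rect) : Prop :=
  subset2 (in_rect A) (in_rect B) /\ ~ subset2 (in_rect B) (in_rect A).

Definition rect_diff (B A : rect) (p : pt2) : Prop := in_rect B p /\ ~ in_rect A p.

Definition side (Q : rect) (k : nat) (p : pt2) : Prop :=
  match k with
  | 0%nat => fst p = rx1 Q /\ ry1 Q <= snd p <= ry2 Q
  | 1%nat => fst p = rx2 Q /\ ry1 Q <= snd p <= ry2 Q
  | 2%nat => snd p = ry1 Q /\ rx1 Q <= fst p <= rx2 Q
  | _     => snd p = ry2 Q /\ rx1 Q <= fst p <= rx2 Q
  end.

Definition rect_bd (Q : rect) (p : pt2) : Prop :=
  side Q 0 p \/ side Q 1 p \/ side Q 2 p \/ side Q 3 p.

(* contact between consecutive rectangles Rt (below) and Rt1 (above) is canonical *)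
Definition canonical (Rt Rt1 : rect) : Prop :=
  (strict_sub Rt Rt1 /\ connected dist2 (rect_diff Rt1 Rt)) \/
  (strict_sub Rt1 Rt /\ connected dist2 (rect_diff Rt Rt1)).

(* type of a canonical contact: i = number of sides of the smaller rectangle
   not contained in the boundary of the larger one *)
Definition b2n (b : bool) : nat := if b then 1%nat else 0%nat.
Definition contact_type (small big : rect) (i : nat) : Prop :=
  exists f : nat -> bool,
    (forall k, (k < 4)%nat -> (f k = true <-> ~ subset2 (side small k) (rect_bd big))) /\
    i = (b2n (f 0%nat) + b2n (f 1%nat) + b2n (f 2%nat) + b2n (f 3%nat))%nat.

Definition is_cup (Rt Rt1 : rect) (i : nat) : Prop :=
  strict_sub Rt Rt1 /\ contact_type Rt Rt1 i.
Definition is_cap (Rt Rt1 : rect) (i : nat) : Prop :=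
  strict_sub Rt1 Rt /\ contact_type Rt1 Rt i.

Record pt3 := P3 { px : R; py : R; pz : R }.
Definition dist3 (a b : pt3) : R :=
  sqrt ((px a - px b)^2 + (py a - py b)^2 + (pz a - pz b)^2).

Definition brick (Q : rect) (zlo zhi : R) (p : pt3) : Prop :=
  in_rect Q (px p, py p) /\ zlo <= pz p <= zhi.

Definition stack3 (R1 R2 R3 : rect) (z0 z1 z2 z3 : R) (p : pt3) : Prop :=
  brick R1 z0 z1 p \/ brick R2 z1 z2 p \/ brick R3 z2 z3 p.

Definition in_plane (n : pt3) (c : R) (p : pt3) : Prop :=
  px n * px p + py n * py p + pz n * pz p = c.

Definition flat_pt (P : pt3 -> Prop) (n : pt3) (c : R) (x : pt3) : Prop :=
  boundary dist3 P x /\ in_plane n c x /\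
  exists e, 0 < e /\ forall y, dist3 x y < e ->
    (boundary dist3 P y <-> in_plane n c y).

Definition closed_face (P : pt3 -> Prop) (F : pt3 -> Prop) : Prop :=
  exists (n : pt3) (c : R) (x0 : pt3),
    n <> P3 0 0 0 /\ flat_pt P n c x0 /\
    forall y, F y <-> closure dist3 (component dist3 (flat_pt P n c) x0) y.

Definition visible (P : pt3 -> Prop) (x y : pt3) : Prop :=
  forall s, 0 <= s <= 1 ->
    P (P3 (px x + s * (px y - px x)) (py x + s * (py y - py x)) (pz x + s * (pz y - pz x))).

Definition guards (P : pt3 -> Prop) (F : pt3 -> Prop) : Prop :=
  forall p, P p -> exists q, F q /\ visible P p q.

Definition same_set (A B : pt3 -> Prop) : Prop := forall p, A p <-> B p.

Definition hface (Q : rect) (z : R) (p : pt3) : Prop :=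
  in_rect Q (px p, py p) /\ pz p = z.

From Stdlib Require Import Reals Lra Psatz Lia Classical ClassicalEpsilon.
Open Scope R_scope.

(* In every admissible configuration the guard is a face of the middle
   brick B2 = R2 x [z1,z2]: either a vertical wall of B2 over a side of R2
   that both R1 and R3 touch, or a horizontal strip of the floor (z = z1) or
   ceiling (z = z2) of B2 lying between the left sides of R2 and of R1 or R3. *)

Definition lerp (x y : pt3) (s : R) : pt3 :=
  P3 (px x + s * (px y - px x)) (py x + s * (py y - py x)) (pz x + s * (pz y - pz x)).

Definition dot (n p : pt3) : R := px n * px p + py n * py p + pz n * pz p.

Definition unit_vec (n : pt3) : Prop := px n ^ 2 + py n ^ 2 + pz n ^ 2 = 1.

Lemma lerp0 x y : lerp x y 0 = x.
Proof. destruct x; unfold lerp; simpl; f_equal; ring. Qed.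

Lemma lerp1 x y : lerp x y 1 = y.
Proof. destruct x, y; unfold lerp; simpl; f_equal; ring. Qed.

Lemma dist3_nonneg x y : 0 <= dist3 x y.
Proof. apply sqrt_pos. Qed.

Lemma dist3_refl x : dist3 x x = 0.
Proof.
  unfold dist3.
  replace ((px x - px x) ^ 2 + (py x - py x) ^ 2 + (pz x - pz x) ^ 2) with 0 by ring.
  apply sqrt_0.
Qed.

Lemma abs_le_sqrt w S : w ^ 2 <= S -> Rabs w <= sqrt S.
Proof.
  intro H. rewrite <- (sqrt_pow2 (Rabs w)) by apply Rabs_pos.
  apply sqrt_le_1_alt. rewrite pow2_abs. exact H.
Qed.

Lemma sum_sq_nonneg a b c : 0 <= a ^ 2 + b ^ 2 + c ^ 2.
Proof. pose proof (pow2_ge_0 a); pose proof (pow2_ge_0 b); pose proof (pow2_ge_0 c). lra. Qed.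

Lemma sq_sub_sym a b : (a - b) ^ 2 = (b - a) ^ 2.
Proof. ring. Qed.

Lemma cauchy_schwarz3 a b c u v w :
  (a * u + b * v + c * w) ^ 2 <= (a ^ 2 + b ^ 2 + c ^ 2) * (u ^ 2 + v ^ 2 + w ^ 2).
Proof.
  pose proof (pow2_ge_0 (a * v - b * u)); pose proof (pow2_ge_0 (a * w - c * u));
  pose proof (pow2_ge_0 (b * w - c * v)). nra.
Qed.

Lemma dist3_triangle a b c : dist3 a c <= dist3 a b + dist3 b c.
Proof.
  unfold dist3.
  set (u1 := px a - px b); set (u2 := py a - py b); set (u3 := pz a - pz b).
  set (v1 := px b - px c); set (v2 := py b - py c); set (v3 := pz b - pz c).
  set (A := u1 ^ 2 + u2 ^ 2 + u3 ^ 2); set (B := v1 ^ 2 + v2 ^ 2 + v3 ^ 2).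
  assert (HA : 0 <= A) by apply sum_sq_nonneg.
  assert (HB : 0 <= B) by apply sum_sq_nonneg.
  assert (Huv : u1 * v1 + u2 * v2 + u3 * v3 <= sqrt A * sqrt B).
  { rewrite <- sqrt_mult by assumption.
    eapply Rle_trans; [apply Rle_abs | apply abs_le_sqrt, cauchy_schwarz3]. }
  pose proof (sqrt_pos A); pose proof (sqrt_pos B).
  rewrite <- (sqrt_pow2 (sqrt A + sqrt B)) by lra.
  apply sqrt_le_1_alt.
  replace ((px a - px c) ^ 2 + (py a - py c) ^ 2 + (pz a - pz c) ^ 2)
    with (A + B + 2 * (u1 * v1 + u2 * v2 + u3 * v3))
    by (unfold A, B, u1, u2, u3, v1, v2, v3; ring).
  replace ((sqrt A + sqrt B) ^ 2)
    with (sqrt A * sqrt A + sqrt B * sqrt B + 2 * (sqrt A * sqrt B)) by ring.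
  rewrite !sqrt_sqrt by assumption. lra.
Qed.

Lemma dot_lipschitz n y z : unit_vec n -> Rabs (dot n z - dot n y) <= dist3 y z.
Proof.
  intro Hn. apply abs_le_sqrt.
  pose proof (cauchy_schwarz3 (px n) (py n) (pz n) (px z - px y) (py z - py y) (pz z - pz y)) as C.
  unfold unit_vec in Hn. rewrite Hn, Rmult_1_l in C. unfold dot.
  replace (px n * px z + py n * py z + pz n * pz z - (px n * px y + py n * py y + pz n * pz y))
    with (px n * (px z - px y) + py n * (py z - py y) + pz n * (pz z - pz y)) by ring.
  replace ((px y - px z) ^ 2 + (py y - py z) ^ 2 + (pz y - pz z) ^ 2)
    with ((px z - px y) ^ 2 + (py z - py y) ^ 2 + (pz z - pz y) ^ 2) by ring.
  exact C.
Qed.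

Lemma coord_lipschitz d y :
  Rabs (px y - px d) <= dist3 d y /\ Rabs (py y - py d) <= dist3 d y /\
  Rabs (pz y - pz d) <= dist3 d y.
Proof.
  pose proof (pow2_ge_0 (px d - px y)); pose proof (pow2_ge_0 (py d - py y));
  pose proof (pow2_ge_0 (pz d - pz y)).
  repeat split; apply abs_le_sqrt; rewrite sq_sub_sym; lra.
Qed.

Lemma dist_lerp x y s t : dist3 (lerp x y s) (lerp x y t) = Rabs (s - t) * dist3 x y.
Proof.
  unfold dist3, lerp; cbn [px py pz].
  replace ((px x + s * (px y - px x) - (px x + t * (px y - px x))) ^ 2 +
           (py x + s * (py y - py x) - (py x + t * (py y - py x))) ^ 2 +
           (pz x + s * (pz y - pz x) - (pz x + t * (pz y - pz x))) ^ 2)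
    with (Rabs (s - t) ^ 2 * ((px x - px y) ^ 2 + (py x - py y) ^ 2 + (pz x - pz y) ^ 2))
    by (rewrite pow2_abs; ring).
  rewrite sqrt_mult by (apply pow2_ge_0 || apply sum_sq_nonneg). rewrite sqrt_pow2 by apply Rabs_pos. reflexivity.
Qed.

Lemma lerp_uniformly_continuous x y e : 0 < e ->
  exists del, 0 < del /\
    forall s t, Rabs (s - t) < del -> dist3 (lerp x y s) (lerp x y t) < e.
Proof.
  intro He. set (L := dist3 x y + 1).
  assert (HL : 0 < L) by (unfold L; pose proof (dist3_nonneg x y); lra).
  exists (e / L). split; [apply Rdiv_lt_0_compat; lra |].
  intros s t Hst. rewrite dist_lerp.
  assert (Rabs (s - t) * dist3 x y <= Rabs (s - t) * L)
    by (apply Rmult_le_compat_l; [apply Rabs_pos | unfold L; lra]).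
  assert (Rabs (s - t) * L < e / L * L) by (apply Rmult_lt_compat_r; lra).
  assert (e / L * L = e) by (field; lra).
  lra.
Qed.

Definition near (d : pt3) (Phi : pt3 -> Prop) : Prop :=
  exists e, 0 < e /\ forall y, dist3 d y < e -> Phi y.

Lemma near_mono d (Phi Psi : pt3 -> Prop) :
  (forall y, Phi y -> Psi y) -> near d Phi -> near d Psi.
Proof. intros H [e [He Hb]]. exists e; auto. Qed.

Lemma near_and d (Phi Psi : pt3 -> Prop) :
  near d Phi -> near d Psi -> near d (fun y => Phi y /\ Psi y).
Proof.
  intros [e1 [He1 H1]] [e2 [He2 H2]]. exists (Rmin e1 e2).
  split; [apply Rmin_glb_lt; assumption |].
  intros y Hy. pose proof (Rmin_l e1 e2); pose proof (Rmin_r e1 e2).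
  split; [apply H1 | apply H2]; lra.
Qed.

Lemma near_between (f : pt3 -> R) d a b :
  (forall y, Rabs (f y - f d) <= dist3 d y) -> a < f d < b ->
  near d (fun y => a < f y < b).
Proof.
  intros Hf Hd. exists (Rmin (f d - a) (b - f d)).
  split; [apply Rmin_glb_lt; lra |].
  intros y Hy. pose proof (Rmin_l (f d - a) (b - f d)); pose proof (Rmin_r (f d - a) (b - f d)).
  destruct (Rabs_def2 (f y - f d) (Rmin (f d - a) (b - f d))) as [H1 H2];
    [specialize (Hf y); lra | lra].
Qed.

(** * Convex sets are connected *)

Definition convex (D : pt3 -> Prop) : Prop :=
  forall x y s, D x -> D y -> 0 <= s <= 1 -> D (lerp x y s).

Lemma lub_approx (E : R -> Prop) m d :
  is_lub E m -> 0 < d -> exists s, E s /\ m - d < s <= m.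
Proof.
  intros [Hub Hlub] Hd. apply NNPP. intro Hno.
  assert (Hu : is_upper_bound E (m - d)).
  { intros s Es. apply Rnot_lt_le. intro Hlt. apply Hno.
    exists s. split; [exact Es |]. split; [exact Hlt | apply Hub, Es]. }
  specialize (Hlub _ Hu). lra.
Qed.

(* Along a segment from a point of U to a point of V, the supremum m of the
   parameters s with lerp [0,s] inside U gives a point in both U and V. *)
Lemma convex_connected D : convex D -> connected dist3 D.
Proof.
  intros HD [U [V [HU [HV [Hcov [Hdis [[x [Dx Ux]] [y [Dy Vy]]]]]]]]].
  set (f := lerp x y).
  assert (Df : forall s, 0 <= s <= 1 -> D (f s)) by (intros; apply HD; auto).
  set (E := fun s => 0 <= s <= 1 /\ forall t, 0 <= t <= s -> U (f t)).
  assert (E0 : E 0).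
  { split; [lra |]. intros t Ht. replace t with 0 by lra. unfold f; rewrite lerp0; exact Ux. }
  destruct (completeness E) as [m Hm];
    [exists 1; intros s [Hs _]; lra | exists 0; exact E0 |].
  assert (Hm01 : 0 <= m <= 1).
  { split; [apply (proj1 Hm); exact E0 | apply (proj2 Hm); intros s [Hs _]; lra]. }
  destruct (Hcov (f m) (Df m Hm01)) as [Um | Vm].
  - (* U is open at f m, so the parameters can be pushed beyond m *)
    destruct (HU _ Um) as [e [He Hball]].
    destruct (lerp_uniformly_continuous x y e He) as [del [Hdel Hcont]].
    destruct (Req_dec m 1) as [Hm1 | Hm1].
    + apply (Hdis y Dy); [| exact Vy].
      rewrite <- (lerp1 x y), <- Hm1. exact Um.
    + destruct (lub_approx E m del Hm Hdel) as [s [[_ Es] Hs]].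
      pose proof (Rmin_l 1 (m + del / 2)); pose proof (Rmin_r 1 (m + del / 2)).
      set (m' := Rmin 1 (m + del / 2)) in *.
      assert (Hmm' : m < m') by (apply Rmin_glb_lt; lra).
      assert (Em' : E m').
      { split; [lra |]. intros t Ht.
        destruct (Rle_dec t s) as [Hts | Hts]; [apply Es; lra |].
        apply Hball, Hcont, Rabs_def1; lra. }
      pose proof (proj1 Hm m' Em'). lra.
  - (* V is open at f m, and it contains points f s with s slightly below m *)
    destruct (HV _ Vm) as [e [He Hball]].
    destruct (lerp_uniformly_continuous x y e He) as [del [Hdel Hcont]].
    destruct (lub_approx E m del Hm Hdel) as [s [[Hs01 Es] Hs]].
    apply (Hdis (f s)); [apply Df; exact Hs01 | apply Es; lra |].
    apply Hball, Hcont, Rabs_def1; lra.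
Qed.

(** * Flat points and faces *)

Definition shift (y n : pt3) (s : R) : pt3 :=
  P3 (px y - s * px n) (py y - s * py n) (pz y - s * pz n).

Lemma dist_shift y n s : unit_vec n -> dist3 y (shift y n s) = Rabs s.
Proof.
  intro Hn. unfold dist3, shift; cbn [px py pz].
  replace ((px y - (px y - s * px n)) ^ 2 + (py y - (py y - s * py n)) ^ 2 +
           (pz y - (pz y - s * pz n)) ^ 2)
    with (Rabs s ^ 2 * (px n ^ 2 + py n ^ 2 + pz n ^ 2)) by (rewrite pow2_abs; ring).
  unfold unit_vec in Hn. rewrite Hn, Rmult_1_r. apply sqrt_pow2, Rabs_pos.
Qed.

Lemma dot_shift y n s : unit_vec n -> dot n (shift y n s) = dot n y - s.
Proof.
  intro Hn. unfold unit_vec in Hn. unfold dot, shift; cbn [px py pz].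
  replace s with (s * (px n ^ 2 + py n ^ 2 + pz n ^ 2)) at 4 by (rewrite Hn; ring). ring.
Qed.

Lemma halfspace_flat P n c d :
  unit_vec n -> dot n d = c -> near d (fun y => P y <-> c <= dot n y) -> flat_pt P n c d.
Proof.
  intros Hn Hd [e0 [He0 Hloc]].
  assert (Hbd : forall y, dist3 d y < e0 / 2 -> dot n y = c -> boundary dist3 P y).
  { intros y Hy Hyc. split.
    - intros e He. exists y. rewrite dist3_refl. split; [exact He |].
      apply Hloc; lra.
    - (* pushing y against the normal leaves the half-space *)
      intros e He.
      pose proof (Rmin_l e (e0 / 2)); pose proof (Rmin_r e (e0 / 2)).
      assert (0 < Rmin e (e0 / 2)) by (apply Rmin_glb_lt; lra).
      set (s := Rmin e (e0 / 2) / 2).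
      assert (Hs : 0 < s /\ s < e /\ s < e0 / 2) by (unfold s; lra).
      pose proof (dist3_triangle d y (shift y n s)) as Htri.
      rewrite dist_shift, Rabs_pos_eq in Htri by (assumption || lra).
      exists (shift y n s). rewrite dist_shift, Rabs_pos_eq by (assumption || lra).
      split; [lra |]. intro HP.
      apply (Hloc (shift y n s) ltac:(lra)) in HP.
      rewrite dot_shift in HP by exact Hn. lra. }
  assert (Hplane : forall y, dist3 d y < e0 / 2 -> boundary dist3 P y -> dot n y = c).
  { intros y Hy [Hin Hout].
    pose proof (dot_lipschitz n y) as Hlip.
    destruct (Rtotal_order (dot n y) c) as [Hl | [Heq | Hg]]; [exfalso | exact Heq | exfalso].
    - (* below the plane, a whole ball around y misses P *)
      pose proof (Rmin_l (e0 / 2) (c - dot n y)); pose proof (Rmin_r (e0 / 2) (c - dot n y)).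
      destruct (Hin (Rmin (e0 / 2) (c - dot n y)) ltac:(apply Rmin_glb_lt; lra))
        as [z [Hz Pz]].
      pose proof (dist3_triangle d y z).
      apply (Hloc z ltac:(lra)) in Pz.
      pose proof (Rle_abs (dot n z - dot n y)); specialize (Hlip z Hn). lra.
    - (* above the plane, a whole ball around y lies in P *)
      pose proof (Rmin_l (e0 / 2) (dot n y - c)); pose proof (Rmin_r (e0 / 2) (dot n y - c)).
      destruct (Hout (Rmin (e0 / 2) (dot n y - c)) ltac:(apply Rmin_glb_lt; lra))
        as [z [Hz Pz]].
      pose proof (dist3_triangle d y z).
      apply Pz, (Hloc z ltac:(lra)).
      specialize (Hlip z Hn). rewrite <- Rabs_Ropp in Hlip.
      pose proof (Rle_abs (- (dot n z - dot n y))). lra. }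
  split; [apply Hbd; [rewrite dist3_refl; lra | exact Hd] |].
  split; [exact Hd |].
  exists (e0 / 2). split; [lra |].
  intros y Hy. split; [apply Hplane | apply Hbd]; exact Hy.
Qed.

Lemma closure_lerp (S : pt3 -> Prop) q x0 :
  (forall l, 0 < l <= 1 -> S (lerp q x0 l)) -> closure dist3 S q.
Proof.
  intros H e He.
  destruct (lerp_uniformly_continuous q x0 e He) as [del [Hdel Hcont]].
  pose proof (Rmin_l 1 (del / 2)); pose proof (Rmin_r 1 (del / 2)).
  set (l := Rmin 1 (del / 2)) in *.
  assert (Hl : 0 < l) by (apply Rmin_glb_lt; lra).
  exists (lerp q x0 l). split; [apply H; lra |].
  rewrite <- (lerp0 q x0) at 1. apply Hcont, Rabs_def1; lra.
Qed.

Lemma closure_mono (S S' : pt3 -> Prop) q :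
  (forall x, S x -> S' x) -> closure dist3 S q -> closure dist3 S' q.
Proof. intros H Hc e He. destruct (Hc e He) as [z [Sz Hz]]. exists z; auto. Qed.

Lemma closure_self (S : pt3 -> Prop) x : S x -> closure dist3 S x.
Proof. intros Hx e He. exists x. rewrite dist3_refl. auto. Qed.

Definition rel_interior (a b x : R) : Prop := a < x < b \/ (a = x /\ x = b).

(* relative interior of the box [lo,hi]; one side is degenerate for a face *)
Definition flat_box (lo hi p : pt3) : Prop :=
  rel_interior (px lo) (px hi) (px p) /\ rel_interior (py lo) (py hi) (py p) /\
  rel_interior (pz lo) (pz hi) (pz p).

Definition closed_box (lo hi p : pt3) : Prop :=
  px lo <= px p <= px hi /\ py lo <= py p <= py hi /\ pz lo <= pz p <= pz hi.

Definition open_box (a b p : pt3) : Prop :=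
  px a < px p < px b /\ py a < py p < py b /\ pz a < pz p < pz b.

Definition box_le (lo hi : pt3) : Prop :=
  px lo <= px hi /\ py lo <= py hi /\ pz lo <= pz hi.

Definition box_center (lo hi : pt3) : pt3 :=
  P3 ((px lo + px hi) / 2) ((py lo + py hi) / 2) ((pz lo + pz hi) / 2).

Lemma interval_convex a b u v s :
  a <= u <= b -> a <= v <= b -> 0 <= s <= 1 -> a <= u + s * (v - u) <= b.
Proof. intros; split; nra. Qed.

Lemma rel_interior_segment a b u v l :
  a <= u <= b -> rel_interior a b v -> 0 < l <= 1 -> rel_interior a b (u + l * (v - u)).
Proof.
  intros Hu [Hv | [Ha Hb]] Hl; [left; split; nra |].
  right. replace u with a by lra. subst. split; ring.
Qed.

Lemma rel_interior_convex a b u v s :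
  rel_interior a b u -> rel_interior a b v -> 0 <= s <= 1 ->
  rel_interior a b (u + s * (v - u)).
Proof.
  intros Hu Hv Hs. destruct (Req_dec s 0) as [-> | Hs0].
  - replace (u + 0 * (v - u)) with u by ring. exact Hu.
  - apply rel_interior_segment; [| exact Hv | lra].
    destruct Hu as [Hu | Hu]; lra.
Qed.

Lemma flat_box_convex lo hi : convex (flat_box lo hi).
Proof.
  intros x y s [Hx1 [Hx2 Hx3]] [Hy1 [Hy2 Hy3]] Hs.
  repeat split; apply rel_interior_convex; assumption.
Qed.

Lemma rel_interior_mid a b : a <= b -> rel_interior a b ((a + b) / 2).
Proof. intro H. destruct (Rlt_or_le a b); [left | right]; lra. Qed.

Lemma flat_box_center lo hi : box_le lo hi -> flat_box lo hi (box_center lo hi).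
Proof.
  intros [H1 [H2 H3]].
  split; [| split]; apply rel_interior_mid; assumption.
Qed.

Lemma closed_box_closure lo hi x0 q :
  flat_box lo hi x0 -> closed_box lo hi q -> closure dist3 (flat_box lo hi) q.
Proof.
  intros [H1 [H2 H3]] [Q1 [Q2 Q3]]. apply closure_lerp with x0.
  intros l Hl. repeat split; apply rel_interior_segment; assumption.
Qed.

Lemma near_open_box a b d : open_box a b d -> near d (open_box a b).
Proof.
  intros [H1 [H2 H3]].
  apply near_and; [| apply near_and];
    [apply (near_between px) | apply (near_between py) | apply (near_between pz)];
    try assumption; intro y; apply coord_lipschitz.
Qed.

Definition guarded_by_face_avoiding (P T B : pt3 -> Prop) : Prop :=
  exists F, closed_face P F /\ guards P F /\ ~ same_set F T /\ ~ same_set F B.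

(* Main face lemma: if the relative interior of a flat box lies in the plane
   n.y = c inside an open box where P is the half-space n.y >= c, then its
   points are flat points of one connected component, whose closure is a
   closed face containing the closed box; it guards P as soon as the closed
   box does. *)
Lemma flat_box_face_guards P T B lo hi a b n c :
  unit_vec n -> box_le lo hi ->
  (forall d, flat_box lo hi d -> dot n d = c /\ open_box a b d) ->
  (forall y, open_box a b y -> (P y <-> c <= dot n y)) ->
  guards P (closed_box lo hi) ->
  ~ T (box_center lo hi) -> ~ B (box_center lo hi) ->
  guarded_by_face_avoiding P T B.
Proof.
  intros Hn Hle Hplane Hlocal Hguard HT HB.
  set (x0 := box_center lo hi).
  assert (Hx0 : flat_box lo hi x0) by (apply flat_box_center, Hle).
  assert (Hflat : forall d, flat_box lo hi d -> flat_pt P n c d).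
  { intros d Hd. destruct (Hplane d Hd) as [Hdc Hab].
    apply halfspace_flat; [exact Hn | exact Hdc |].
    apply near_mono with (open_box a b); [exact Hlocal | apply near_open_box, Hab]. }
  set (S := component dist3 (flat_pt P n c) x0).
  assert (Hcomp : forall d, flat_box lo hi d -> S d).
  { intros d Hd. split; [apply Hflat, Hx0 |].
    exists (flat_box lo hi). split; [exact Hflat |].
    split; [exact Hx0 |]. split; [exact Hd |].
    apply convex_connected, flat_box_convex. }
  assert (HF0 : closure dist3 S x0) by (apply closure_self, Hcomp, Hx0).
  exists (closure dist3 S). split; [| split; [| split]].
  - exists n, c, x0. split; [| split; [apply Hflat, Hx0 | tauto]].
    intro E. rewrite E in Hn. unfold unit_vec in Hn; simpl in Hn. lra.
  - intros p Pp. destruct (Hguard p Pp) as [q [Hq Hvis]]. exists q. split; [| exact Hvis].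
    apply closure_mono with (flat_box lo hi); [exact Hcomp |].
    apply closed_box_closure with x0; assumption.
  - intro E. apply HT, E, HF0.
  - intro E. apply HB, E, HF0.
Qed.

(** * Visibility inside the stack *)

Definition watched_through (P G B : pt3 -> Prop) : Prop :=
  exists (C : pt3 -> Prop) q,
    convex C /\ (forall x, B x -> C x) /\ (forall x, C x -> P x) /\ C q /\ G q.

Lemma watched_sees P G B p :
  watched_through P G B -> B p -> exists q, G q /\ visible P p q.
Proof.
  intros [C [q [Hconv [HBC [HCP [Cq Gq]]]]]] Bp. exists q. split; [exact Gq |].
  intros s Hs. apply HCP, (Hconv p q s); auto.
Qed.

Lemma stack_guarded R1 R2 R3 z0 z1 z2 z3 G :
  watched_through (stack3 R1 R2 R3 z0 z1 z2 z3) G (brick R1 z0 z1) ->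
  watched_through (stack3 R1 R2 R3 z0 z1 z2 z3) G (brick R2 z1 z2) ->
  watched_through (stack3 R1 R2 R3 z0 z1 z2 z3) G (brick R3 z2 z3) ->
  guards (stack3 R1 R2 R3 z0 z1 z2 z3) G.
Proof.
  intros W1 W2 W3 p [Hp | [Hp | Hp]];
    [exact (watched_sees _ _ _ p W1 Hp) | exact (watched_sees _ _ _ p W2 Hp)
    | exact (watched_sees _ _ _ p W3 Hp)].
Qed.

Lemma brick_convex Q zlo zhi : convex (brick Q zlo zhi).
Proof.
  intros x y s [[Hx1 Hx2] Hx3] [[Hy1 Hy2] Hy3] Hs.
  cbn [fst snd] in *. split; [split |]; apply interval_convex; assumption.
Qed.

Lemma column_in_solid (P : pt3 -> Prop) Q Qa Qb za zb zc :
  subset2 (in_rect Q) (in_rect Qa) -> subset2 (in_rect Q) (in_rect Qb) ->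
  (forall x, brick Qa za zb x -> P x) -> (forall x, brick Qb zb zc x -> P x) ->
  forall x, brick Q za zc x -> P x.
Proof.
  intros HQa HQb Ha Hb x [Hx Hz].
  destruct (Rle_dec (pz x) zb); [apply Ha | apply Hb]; split; auto; lra.
Qed.

Definition touches_side (A B : rect) (k : nat) : Prop :=
  exists w, side B k w /\ in_rect A w.

Lemma subset_bounds A B :
  valid_rect A -> subset2 (in_rect A) (in_rect B) ->
  rx1 B <= rx1 A /\ rx2 A <= rx2 B /\ ry1 B <= ry1 A /\ ry2 A <= ry2 B.
Proof.
  intros [VA1 VA2] Hs. unfold in_rect in Hs.
  pose proof (Hs (rx1 A, ry1 A)) as H1; pose proof (Hs (rx2 A, ry2 A)) as H2.
  cbn [fst snd] in *. specialize (H1 ltac:(lra)); specialize (H2 ltac:(lra)). lra.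
Qed.

Lemma side_nonempty Q k : valid_rect Q -> exists w, side Q k w.
Proof.
  intros [V1 V2]. destruct k as [| [| [| k]]];
    [exists (rx1 Q, ry1 Q) | exists (rx2 Q, ry1 Q) | exists (rx1 Q, ry1 Q) | exists (rx1 Q, ry2 Q)];
    simpl; lra.
Qed.

Lemma side_in_rect Q k w : valid_rect Q -> side Q k w -> in_rect Q w.
Proof. intros [V1 V2]. unfold in_rect; destruct k as [| [| [| k]]]; simpl; lra. Qed.

Lemma touches_of_subset A B k :
  valid_rect B -> subset2 (in_rect B) (in_rect A) -> touches_side A B k.
Proof.
  intros VB Hs. destruct (side_nonempty B k VB) as [w Hw].
  exists w. split; [exact Hw |]. apply Hs, (side_in_rect B k w VB Hw).
Qed.

Lemma contact_type_exists A B : exists i, contact_type A B i.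
Proof.
  set (f := fun k => if excluded_middle_informative (~ subset2 (side A k) (rect_bd B))
                     then true else false).
  exists (b2n (f 0%nat) + b2n (f 1%nat) + b2n (f 2%nat) + b2n (f 3%nat))%nat.
  exists f. split; [| reflexivity].
  intros k _. unfold f.
  destruct excluded_middle_informative; split; intros; auto; try discriminate; contradiction.
Qed.

(* A contact of type other than 4: a side of the smaller rectangle lies on
   the boundary of the larger one, hence the smaller touches a side of it. *)
Lemma touches_of_not_type4 A B :
  valid_rect A -> ~ contact_type A B 4 -> exists k, (k < 4)%nat /\ touches_side A B k.
Proof.
  intros VA H4.
  assert (Hk : exists k, (k < 4)%nat /\ subset2 (side A k) (rect_bd B)).
  { apply NNPP. intro Hn. apply H4. exists (fun _ => true). split; [| reflexivity].
    intros k Hk. split; [| reflexivity]. intros _ Hs. apply Hn. exists k; auto. }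
  destruct Hk as [k [Hk Hsub]].
  destruct (side_nonempty A k VA) as [w Hw].
  pose proof (side_in_rect A k w VA Hw) as HwA.
  destruct (Hsub w Hw) as [S | [S | [S | S]]];
    [exists 0%nat | exists 1%nat | exists 2%nat | exists 3%nat];
    (split; [lia | exists w; auto]).
Qed.

Lemma canonical_strict A B : canonical A B -> strict_sub A B \/ strict_sub B A.
Proof. intros [[H _] | [H _]]; auto. Qed.

(** * Face guards of the middle brick *)

(* Arithmetic side conditions of [flat_box_face_guards] for a face of the
   middle brick, by linear arithmetic. *)
Ltac face_condition :=
  match goal with
  | |- unit_vec _ => unfold unit_vec; simpl; ring
  | |- box_le _ _ => unfold box_le; simpl; lra
  | |- forall d, flat_box _ _ d -> _ =>
      let d := fresh "d" in let Hd := fresh "Hd" in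
      intros d Hd; unfold flat_box, rel_interior, open_box, dot in *; simpl in *;
      decompose [and or] Hd; repeat split; lra
  | |- forall y, open_box _ _ y -> _ =>
      let y := fresh "y" in let Hy := fresh "Hy" in let H := fresh "H" in
      intros y Hy; unfold open_box, dot, stack3, brick, in_rect in *; simpl in *; split;
      [ intro H; decompose [and or] H; lra
      | intro H; right; left; repeat split; lra ]
  | |- ~ _ =>
      let H := fresh "H" in
      unfold hface, box_center; simpl; intros [_ H]; lra
  end.

Section MiddleBrickFaces.

Variables (R1 R2 R3 : rect) (z0 z1 z2 z3 : R).
Hypotheses (V2 : valid_rect R2) (Hz01 : z0 < z1) (Hz12 : z1 < z2) (Hz23 : z2 < z3).

Local Notation Stack := (stack3 R1 R2 R3 z0 z1 z2 z3).

Lemma brick1_in_stack x : brick R1 z0 z1 x -> Stack x.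
Proof. unfold stack3; tauto. Qed.
Lemma brick2_in_stack x : brick R2 z1 z2 x -> Stack x.
Proof. unfold stack3; tauto. Qed.
Lemma brick3_in_stack x : brick R3 z2 z3 x -> Stack x.
Proof. unfold stack3; tauto. Qed.

Lemma watched_by_own_brick G Q zlo zhi q :
  (forall x, brick Q zlo zhi x -> Stack x) -> brick Q zlo zhi q -> G q ->
  watched_through Stack G (brick Q zlo zhi).
Proof.
  intros HP Hq Gq. exists (brick Q zlo zhi), q.
  split; [apply brick_convex |]. split; [auto |]. split; [exact HP |]. split; assumption.
Qed.

(* The wall of B2 over side k of R2 guards the stack if R1 and R3 both touch
   that side: the bottom two bricks see a point of the wall at height z1,
   the top brick one at height z2. *)
Lemma wall_guard k :
  (k < 4)%nat -> touches_side R1 R2 k -> touches_side R3 R2 k ->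
  guarded_by_face_avoiding Stack (hface R3 z3) (hface R1 z0).
Proof.
  intros Hk [[u1 v1] [S1 I1]] [[u3 v3] [S3 I3]].
  pose proof (side_in_rect R2 k (u1, v1) V2 S1) as I12.
  assert (Hguard : forall lo hi,
    closed_box lo hi (P3 u1 v1 z1) -> closed_box lo hi (P3 u3 v3 z2) ->
    guards Stack (closed_box lo hi)).
  { intros lo hi Q1 Q3. apply stack_guarded.
    - apply watched_by_own_brick with (q := P3 u1 v1 z1); [exact brick1_in_stack | | exact Q1].
      split; [exact I1 | simpl; lra].
    - apply watched_by_own_brick with (q := P3 u1 v1 z1); [exact brick2_in_stack | | exact Q1].
      split; [exact I12 | simpl; lra].
    - apply watched_by_own_brick with (q := P3 u3 v3 z2); [exact brick3_in_stack | | exact Q3].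
      split; [exact I3 | simpl; lra]. }
  (* for each side: the wall box, an open box around it in which the stack
     is the half-space on the R2 side of the wall, and the inward normal *)
  unfold valid_rect in V2.
  destruct k as [| [| [| [| k]]]]; [| | | | lia]; simpl in S1, S3.
  - apply (flat_box_face_guards _ _ _ (P3 (rx1 R2) (ry1 R2) z1) (P3 (rx1 R2) (ry2 R2) z2)
      (P3 (rx1 R2 - 1) (ry1 R2) z1) (P3 (rx2 R2) (ry2 R2) z2) (P3 1 0 0) (rx1 R2));
      try face_condition.
    apply Hguard; unfold closed_box; simpl; lra.
  - apply (flat_box_face_guards _ _ _ (P3 (rx2 R2) (ry1 R2) z1) (P3 (rx2 R2) (ry2 R2) z2)
      (P3 (rx1 R2) (ry1 R2) z1) (P3 (rx2 R2 + 1) (ry2 R2) z2) (P3 (-1) 0 0) (- rx2 R2));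
      try face_condition.
    apply Hguard; unfold closed_box; simpl; lra.
  - apply (flat_box_face_guards _ _ _ (P3 (rx1 R2) (ry1 R2) z1) (P3 (rx2 R2) (ry1 R2) z2)
      (P3 (rx1 R2) (ry1 R2 - 1) z1) (P3 (rx2 R2) (ry2 R2) z2) (P3 0 1 0) (ry1 R2));
      try face_condition.
    apply Hguard; unfold closed_box; simpl; lra.
  - apply (flat_box_face_guards _ _ _ (P3 (rx1 R2) (ry2 R2) z1) (P3 (rx2 R2) (ry2 R2) z2)
      (P3 (rx1 R2) (ry1 R2) z1) (P3 (rx2 R2) (ry2 R2 + 1) z2) (P3 0 (-1) 0) (- ry2 R2));
      try face_condition.
    apply Hguard; unfold closed_box; simpl; lra.
Qed.

Section NestedInMiddle.

Hypotheses (V1 : valid_rect R1) (V3 : valid_rect R3)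
  (S1 : subset2 (in_rect R1) (in_rect R2)) (S3 : subset2 (in_rect R3) (in_rect R2)).

(* Floor strip of B2 at z1 between the left sides of R2 and R1: the bottom
   bricks see its corner on R1, the top brick sees it down the column over R3. *)
Lemma floor_strip_guard :
  rx1 R2 < rx1 R1 -> rx1 R3 <= rx1 R1 ->
  guarded_by_face_avoiding Stack (hface R3 z3) (hface R1 z0).
Proof.
  intros Hl1 Hl3.
  pose proof (subset_bounds R1 R2 V1 S1); pose proof (subset_bounds R3 R2 V3 S3).
  unfold valid_rect in *.
  apply (flat_box_face_guards _ _ _ (P3 (rx1 R2) (ry1 R2) z1) (P3 (rx1 R1) (ry2 R2) z1)
    (P3 (rx1 R2) (ry1 R2) z0) (P3 (rx1 R1) (ry2 R2) z2) (P3 0 0 1) z1);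
    try face_condition.
  apply stack_guarded.
  - apply watched_by_own_brick with (q := P3 (rx1 R1) (ry1 R1) z1);
      [exact brick1_in_stack | | unfold closed_box]; unfold brick, in_rect; simpl; lra.
  - apply watched_by_own_brick with (q := P3 (rx1 R1) (ry1 R1) z1);
      [exact brick2_in_stack | | unfold closed_box]; unfold brick, in_rect; simpl; lra.
  - exists (brick R3 z1 z3), (P3 (rx1 R3) (ry1 R3) z1).
    split; [apply brick_convex |]. split; [intros x [Hx Hz]; split; [exact Hx | lra] |].
    split; [apply (column_in_solid _ R3 R2 R3 z1 z2 z3); auto;
            [intros w; auto | exact brick2_in_stack | exact brick3_in_stack] |].
    unfold closed_box, brick, in_rect; simpl; lra.
Qed.

(* Ceiling strip of B2 at z2 between the left sides of R2 and R3, the mirror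
   image of the floor strip. *)
Lemma ceiling_strip_guard :
  rx1 R2 < rx1 R3 -> rx1 R1 <= rx1 R3 ->
  guarded_by_face_avoiding Stack (hface R3 z3) (hface R1 z0).
Proof.
  intros Hl3 Hl1.
  pose proof (subset_bounds R1 R2 V1 S1); pose proof (subset_bounds R3 R2 V3 S3).
  unfold valid_rect in *.
  apply (flat_box_face_guards _ _ _ (P3 (rx1 R2) (ry1 R2) z2) (P3 (rx1 R3) (ry2 R2) z2)
    (P3 (rx1 R2) (ry1 R2) z1) (P3 (rx1 R3) (ry2 R2) z3) (P3 0 0 (-1)) (- z2));
    try face_condition.
  apply stack_guarded.
  - exists (brick R1 z0 z2), (P3 (rx1 R1) (ry1 R1) z2).
    split; [apply brick_convex |]. split; [intros x [Hx Hz]; split; [exact Hx | lra] |].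
    split; [apply (column_in_solid _ R1 R1 R2 z0 z1 z2); auto;
            [intros w; auto | exact brick1_in_stack | exact brick2_in_stack] |].
    unfold closed_box, brick, in_rect; simpl; lra.
  - apply watched_by_own_brick with (q := P3 (rx1 R3) (ry1 R3) z2);
      [exact brick2_in_stack | | unfold closed_box]; unfold brick, in_rect; simpl; lra.
  - apply watched_by_own_brick with (q := P3 (rx1 R3) (ry1 R3) z2);
      [exact brick3_in_stack | | unfold closed_box]; unfold brick, in_rect; simpl; lra.
Qed.

(* Signature cup-cap: compare the left sides of R1 and R3 inside R2. *)
Lemma cup_cap_guard : guarded_by_face_avoiding Stack (hface R3 z3) (hface R1 z0).
Proof.
  pose proof (subset_bounds R1 R2 V1 S1); pose proof (subset_bounds R3 R2 V3 S3).
  destruct (Rle_lt_dec (rx1 R3) (rx1 R1)) as [H31 | H13].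
  - destruct (Rlt_le_dec (rx1 R2) (rx1 R1)) as [H21 | H12].
    + apply floor_strip_guard; assumption.
    + (* R1 and R3 both touch the left side of R2 *)
      unfold valid_rect in *.
      apply (wall_guard 0); [lia | exists (rx1 R1, ry1 R1) | exists (rx1 R3, ry1 R3)];
        unfold in_rect; simpl; lra.
  - apply ceiling_strip_guard; lra.
Qed.

End NestedInMiddle.

End MiddleBrickFaces.

Theorem mainTheorem10 :
  forall (R1 R2 R3 : rect) (z0 z1 z2 z3 : R),
    valid_rect R1 -> valid_rect R2 -> valid_rect R3 ->
    z0 < z1 -> z1 < z2 -> z2 < z3 ->
    canonical R1 R2 -> canonical R2 R3 ->
    (* signature is not of the form  cap_i cap_4 *)
    ~ (exists i, is_cap R1 R2 i /\ is_cap R2 R3 4) ->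
    (* signature is not of the form  cup_4 cup_i *)
    ~ (exists i, is_cup R1 R2 4 /\ is_cup R2 R3 i) ->
    exists F : pt3 -> Prop,
      closed_face (stack3 R1 R2 R3 z0 z1 z2 z3) F /\
      guards (stack3 R1 R2 R3 z0 z1 z2 z3) F /\
      ~ same_set F (hface R3 z3) /\
      ~ same_set F (hface R1 z0).
Proof.
  intros R1 R2 R3 z0 z1 z2 z3 V1 V2 V3 Z01 Z12 Z23 C12 C23 Ncap Ncup.
  change (guarded_by_face_avoiding (stack3 R1 R2 R3 z0 z1 z2 z3) (hface R3 z3) (hface R1 z0)).
  destruct (canonical_strict R1 R2 C12) as [S12 | S21];
    destruct (canonical_strict R2 R3 C23) as [S23 | S32].
  - (* cup cup: R1 touches a side of R2, and R3 contains R2 *)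
    assert (N4 : ~ contact_type R1 R2 4).
    { intro H4. destruct (contact_type_exists R2 R3) as [i Hi].
      apply Ncup. exists i. split; split; assumption. }
    destruct (touches_of_not_type4 R1 R2 V1 N4) as [k [Hk T1]].
    apply wall_guard with k; auto. apply touches_of_subset; [exact V2 | apply S23].
  -
    apply cup_cap_guard; auto; [apply S12 | apply S32].
  - (* cap cup: R1 and R3 both contain R2 *)
    apply wall_guard with 0%nat; auto; apply touches_of_subset; auto; [apply S21 | apply S23].
  - (* cap cap: R3 touches a side of R2, and R1 contains R2 *)
    assert (N4 : ~ contact_type R3 R2 4).
    { intro H4. destruct (contact_type_exists R2 R1) as [i Hi].
      apply Ncap. exists i. split; split; assumption. }
    destruct (touches_of_not_type4 R3 R2 V3 N4) as [k [Hk T3]].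
    apply wall_guard with k; auto. apply touches_of_subset; [exact V2 | apply S21].
Qed.
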